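(* Let $0<\alpha<d$, $\mathcal{B}_\alpha\in\{\mathcal{B}^c_\alpha,\mathcal{B}^u_\alpha\}$ and $f\in L^1_{\mathrm{loc}}(\mathbb{R}^d)$. Then for each $B\in\mathcal{B}_\alpha$ we have $f_{Q_B}\sim f_B$ and $\ell(Q_B)\sim r(B)$, i.e. $C^{-1}f_B\le f_{Q_B}\le Cf_B$ and $C^{-1}r(B)\le \ell(Q_B)\le C r(B)$ with a constant $C$ depending only on $d$.
   Context: $f_B=\frac1{|B|}\int_B|f|$ for a ball or cube $B$; $r(B)$ is the radius of a ball, $\ell(Q)$ the sidelength of a cube, $\overline B$ the closure. Fix $3^d$ (translated) dyadic grids $\mathcal{D}_1,\dots,\mathcal{D}_{3^d}$ such that every ball $B$ is contained in some cube of $\mathcal{D}=\mathcal{D}_1\cup\dots\cup\mathcal{D}_{3^d}$ of sidelength at most $C_d\,r(B)$; for each ball $B$ let $Q_B$ be such a cube. $\mathrm{M}^c_\alpha f(x)=\sup_{r>0}r^\alpha f_{B(x,r)}$, $\mathrm{M}^u_\alpha f(x)=\sup_{B\ni x}r(B)^\alpha f_B$. $\mathcal{B}^c_\alpha(x)=\{B(x,r)\}$ with $r$ the largest radius with $\mathrm{M}^c_\alpha f(x)=r^\alpha f_{B(x,r)}$; $\mathcal{B}^u_\alpha(x)$ is the set of balls $B$ with $x\in\overline B$, $r(B)^\alpha f_B=\mathrm{M}^u_\alpha f(x)$ and $r(A)^\alpha f_A<\mathrm{M}^u_\alpha f(x)$ for all balls $A\supsetneq B$. $\mathcal{B}^c_\alpha=\bigcup_x\mathcal{B}^c_\alpha(x)$,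 $\mathcal{B}^u_\alpha=\bigcup_x\mathcal{B}^u_\alpha(x)$. *)

(* R^d is modelled as d.-tuple R with the product
   (= Borel) sigma-algebra shipped by MathComp-Analysis. *)
From HB Require Import structures.
From mathcomp Require Import all_boot all_order all_algebra.
From mathcomp Require Import all_classical all_reals all_analysis.
Set Implicit Arguments. Unset Strict Implicit. Unset Printing Implicit Defensive.
Import Order.TTheory GRing.Theory Num.Theory.
Local Open Scope classical_set_scope.
Local Open Scope ring_scope.

Section Defs.
Variables (R : realType) (d : nat).
Local Notation pt := (d.-tuple R).

Definition edist (x y : pt) : R :=
  Num.sqrt (\sum_(i < d) (tnth x i - tnth y i) ^+ 2).

Definition ballS (c : pt) (r : R) : set pt := [set y | edist y c < r].
Definition cballS (c : pt) (r : R) : set pt := [set y | edist y c <= r].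

Definition cubeS (a : pt) (l : R) : set pt :=
  [set y | forall i, tnth a i <= tnth y i < tnth a i + l].

(* mu is Lebesgue measure on R^d: the (unique) measure on the Borel sets
   giving every half-open box its volume *)
Definition is_lebesgue (mu : {measure set pt -> \bar R}) : Prop :=
  forall a b : pt, (forall i, tnth a i <= tnth b i) ->
    mu [set y | forall i, tnth a i <= tnth y i < tnth b i] =
    (\prod_(i < d) (tnth b i - tnth a i))%:E.

Definition L1loc (mu : {measure set pt -> \bar R}) (f : pt -> R) : Prop :=
  measurable_fun setT f /\
  forall c r, 0 < r -> mu.-integrable (ballS c r) (fun y => (f y)%:E).

Definition avg (mu : {measure set pt -> \bar R}) (f : pt -> R) (A : set pt) : R :=
  fine (\int[mu]_(y in A) `|f y|%:E)%E / fine (mu A).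

Definition bval mu alpha f (c : pt) (r : R) : R :=
  r `^ alpha * avg mu f (ballS c r).

Definition Mc mu alpha f (x : pt) : \bar R :=
  ereal_sup [set (bval mu alpha f x r)%:E | r in [set r : R | 0 < r]].
Definition Mu mu alpha f (x : pt) : \bar R :=
  ereal_sup [set (bval mu alpha f cr.1 cr.2)%:E |
             cr in [set cr : pt * R | 0 < cr.2 /\ ballS cr.1 cr.2 x]].

Definition inBc_at mu alpha f (x : pt) (c : pt) (r : R) : Prop :=
  [/\ c = x, 0 < r, (bval mu alpha f x r)%:E = Mc mu alpha f x &
      forall r', 0 < r' -> (bval mu alpha f x r')%:E = Mc mu alpha f x -> r' <= r].

Definition inBu_at mu alpha f (x : pt) (c : pt) (r : R) : Prop :=
  [/\ 0 < r, cballS c r x, (bval mu alpha f c r)%:E = Mu mu alpha f x &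
      forall c' r', 0 < r' -> ballS c r `<=` ballS c' r' ->
        ballS c r <> ballS c' r' ->
        ((bval mu alpha f c' r')%:E < Mu mu alpha f x)%E].

Definition inBc mu alpha f c r := exists x, inBc_at mu alpha f x c r.
Definition inBu mu alpha f c r := exists x, inBu_at mu alpha f x c r.

(* translated dyadic grid D^t = { 2^{-k}([0,1)^d + m + (-1)^k t) : k in Z, m in Z^d },
   cubes encoded by (lower corner, side length) *)
Definition in_grid (t : pt) (Q : pt * R) : Prop :=
  exists (k : int) (m : d.-tuple int),
    Q.2 = 2%:R ^ (- k) /\
    forall i, tnth Q.1 i = 2%:R ^ (- k) * ((tnth m i)%:~R + (-1) ^ k * tnth t i).

Definition in_D (t : 'I_(3 ^ d) -> pt) (Q : pt * R) : Prop :=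
  exists i, in_grid (t i) Q.

End Defs.

(* For B = B(c,r) in B^c_alpha or B^u_alpha, maximality gives
   rho^alpha f_{B(c,rho)} <= r^alpha f_B for every rho > r (in the uncentered
   case because x lies in the closure of B, hence in B(c,rho)), so
   f_{B(c,rho)} <= f_B.  A cube Q containing B has side l > r/d, so Q lies in
   B(c, 2 d l); comparing the integrals of |f| over B <= Q <= B(c, 2 d l), whose
   measures are all comparable to l^d, gives f_Q ~ f_B, and r/d < l <= Cd r
   gives l ~ r. *)

From Pilot Require Import Defs.
From HB Require Import structures.
From mathcomp Require Import all_boot all_order all_algebra.
From mathcomp Require Import all_classical all_reals all_analysis.
From mathcomp Require Import measurable_realfun ring lra.
Set Implicit Arguments. Unset Strict Implicit. Unset Printing Implicit Defensive.
Import Order.TTheory GRing.Theory Num.Theory.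
Local Open Scope classical_set_scope.
Local Open Scope ring_scope.

Section BallsAndCubes.
Variables (R : realType) (d : nat).
Local Notation pt := (d.-tuple R).

Definition shift (c : pt) (s : R) : pt := [tuple tnth c j + s | j < d].

(* [Defs.edist] is qualified because MathComp-Analysis exports another [edist]. *)

Lemma coord_le_edist (x y : pt) i : `|tnth x i - tnth y i| <= Defs.edist x y.
Proof.
rewrite /Defs.edist -sqrtr_sqr ler_sqrt ?sumr_ge0// => [|j _]; last exact: sqr_ge0.
by rewrite (bigD1 i)//= lerDl sumr_ge0// => j _; exact: sqr_ge0.
Qed.

(* The crude factor d (rather than sqrt d) keeps square roots out of the constants. *)
Lemma edist_le_coord (x y : pt) s : 0 <= s ->
  (forall i, `|tnth x i - tnth y i| <= s) -> Defs.edist x y <= d%:R * s.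
Proof.
move=> s0 xy; rewrite /Defs.edist -(ger0_norm (mulr_ge0 (ler0n _ d) s0)) -sqrtr_sqr.
rewrite ler_sqrt ?sqr_ge0//; apply: (@le_trans _ _ (d%:R * s ^+ 2)).
  rewrite -[in X in _ <= X](card_ord d) mulr_natl -sumr_const ler_sum// => i _.
  by rewrite -real_normK ?num_real// lerXn2r ?nnegrE.
rewrite exprMn ler_wpM2r ?sqr_ge0// expr2 -natrM ler_nat.
by case: d => // n; rewrite leq_pmulr.
Qed.

Lemma edistxx (x : pt) : Defs.edist x x = 0.
Proof. by rewrite /Defs.edist big1 ?sqrtr0// => i _; rewrite subrr expr0n. Qed.

Lemma ballS_center (c : pt) r : 0 < r -> ballS c r c.
Proof. by rewrite /ballS /= edistxx. Qed.

Lemma ballS_of_coord (c y : pt) s r : 0 <= s -> d%:R * s < r ->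
  (forall i, `|tnth y i - tnth c i| <= s) -> ballS c r y.
Proof. by move=> s0 sr yc; rewrite /ballS /=; exact: le_lt_trans (edist_le_coord s0 yc) sr. Qed.

Lemma ballS_of_coord_small (c y : pt) r : (0 < d)%N -> 0 < r ->
  (forall i, `|tnth y i - tnth c i| <= r / (2 * d%:R)) -> ballS c r y.
Proof.
move=> d0 r0; have D0 : 0 < d%:R :> R by rewrite ltr0n.
apply: ballS_of_coord; first by rewrite divr_ge0 //; lra.
have -> : d%:R * (r / (2 * d%:R)) = r / 2 by field; rewrite gt_eqF.
lra.
Qed.

Lemma ballS_sub_cubeS (c : pt) r : ballS c r `<=` cubeS (shift c (- r)) (2 * r).
Proof.
move=> y /(le_lt_trans (coord_le_edist y c _)) yc i; rewrite tnth_mktuple.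
by move: (yc i); rewrite ltr_norml => /andP[? ?]; apply/andP; split; lra.
Qed.

Lemma cubeS_sub_ballS (c : pt) r : (0 < d)%N -> 0 < r ->
  cubeS (shift c (- (r / (2 * d%:R)))) (r / d%:R) `<=` ballS c r.
Proof.
move=> d0 r0 y; have -> : r / d%:R = 2 * (r / (2 * d%:R)).
  by field; rewrite pnatr_eq0 -lt0n.
move=> yc; apply: ballS_of_coord_small d0 r0 _ => i.
by move: (yc i); rewrite tnth_mktuple ler_norml => /andP[? ?]; apply/andP; split; lra.
Qed.

Lemma cubeS_sub_ballS_of_mem (a c : pt) l rho : 0 <= l -> cubeS a l c ->
  d%:R * l < rho -> cubeS a l `<=` ballS c rho.
Proof.
move=> l0 ac lrho y ay; apply: ballS_of_coord l0 lrho _ => i.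
by move: (ay i) (ac i) => /andP[? ?] /andP[? ?]; rewrite ler_norml; apply/andP; split; lra.
Qed.

Lemma cubeS_side_gt (a c : pt) r l : (0 < d)%N -> 0 < r ->
  ballS c r `<=` cubeS a l -> r / d%:R < l.
Proof.
move=> d0 r0 sub; set s := r / (2 * d%:R).
have s0 : 0 <= s by rewrite divr_ge0 ?mulr_ge0 ?ler0n ?(ltW r0).
have mem_shift v : `|v| <= s -> cubeS a l (shift c v).
  move=> vs; apply/sub/ballS_of_coord_small => // i.
  by rewrite tnth_mktuple addrAC subrr add0r.
have [lo hi] : cubeS a l (shift c (- s)) /\ cubeS a l (shift c s).
  by split; apply: mem_shift; rewrite ?normrN ger0_norm.
move: (lo (Ordinal d0)) (hi (Ordinal d0)); rewrite !tnth_mktuple => /andP[? _] /andP[_ ?].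
have -> : r / d%:R = 2 * s by rewrite /s; field; rewrite pnatr_eq0 -lt0n.
lra.
Qed.

Lemma measurable_cubeS (a : pt) l : measurable (cubeS a l).
Proof.
have -> : cubeS a l = \bigcap_(i in [set: 'I_d])
    ((fun y : pt => tnth y i) @^-1` [set` `[tnth a i, tnth a i + l[]).
  by apply/seteqP; split => y /= ay i; rewrite ?in_itv/=; [move=> _; exact: ay | exact: ay i I].
apply: fin_bigcap_measurable; first exact: finite_finset.
move=> i _; rewrite -[X in measurable X]setTI.
exact: (measurable_tnth i) measurableT _ (measurable_itv _).
Qed.

Lemma measurable_ballS (c : pt) r : measurable (ballS c r).
Proof.
have msum : measurable_fun setT (fun y : pt => \sum_(i < d) (tnth y i - tnth c i) ^+ 2).
  apply: measurable_sum => i; apply/measurable_funX/measurable_funB => //.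
  exact: measurable_tnth.
have medist : measurable_fun setT (fun y : pt => Defs.edist y c).
  exact: measurableT_comp (continuous_measurable_fun (@sqrt_continuous R)) msum.
have -> : ballS c r = (fun y : pt => Defs.edist y c) @^-1` [set` `]-oo, r[].
  by apply/seteqP; split => y /=; rewrite in_itv.
by rewrite -[X in measurable X]setTI; apply: medist => //; exact: measurable_itv.
Qed.

Section Lebesgue.
Variable mu : {measure set pt -> \bar R}.
Hypothesis mu_leb : is_lebesgue mu.

Lemma lebesgue_cubeS (a : pt) l : 0 <= l -> mu (cubeS a l) = (l ^+ d)%:E.
Proof.
move=> l0; have := @mu_leb a (shift a l).
have -> : [set y | forall i, tnth a i <= tnth y i < tnth (shift a l) i] = cubeS a l.
  by apply/seteqP; split => y /= ay i; have := ay i; rewrite tnth_mktuple.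
under eq_bigr => i _ do rewrite tnth_mktuple addrAC subrr add0r.
rewrite prodr_const card_ord; apply => i.
by rewrite tnth_mktuple lerDl.
Qed.

Lemma lebesgue_ballS_bounds (c : pt) r : (0 < d)%N -> 0 < r ->
  (r / d%:R) ^+ d <= fine (mu (ballS c r)) <= (2 * r) ^+ d.
Proof.
move=> d0 r0; have D0 : 0 < d%:R :> R by rewrite ltr0n.
have lo : (((r / d%:R) ^+ d)%:E <= mu (ballS c r))%E.
  rewrite -(lebesgue_cubeS (shift c (- (r / (2 * d%:R))))); last by rewrite divr_ge0 ?ltW.
  apply: le_measure; rewrite ?inE; [exact: measurable_cubeS | exact: measurable_ballS |].
  exact: cubeS_sub_ballS.
have hi : (mu (ballS c r) <= ((2 * r) ^+ d)%:E)%E.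
  rewrite -(lebesgue_cubeS (shift c (- r))); last lra.
  apply: le_measure; rewrite ?inE; [exact: measurable_ballS | exact: measurable_cubeS |].
  exact: ballS_sub_cubeS.
have fin : mu (ballS c r) \is a fin_num.
  by rewrite ge0_fin_numE ?measure_ge0// (le_lt_trans hi) ?ltry.
by rewrite -!lee_fin fineK// lo hi.
Qed.

End Lebesgue.

End BallsAndCubes.

Section Averages.
Variables (R : realType) (d : nat) (mu : {measure set (d.-tuple R) -> \bar R}).
Variable f : d.-tuple R -> R.
Local Notation pt := (d.-tuple R).

Definition mass (A : set pt) : R := fine (\int[mu]_(y in A) `|f y|%:E).

Lemma mass_ge0 (A : set pt) : 0 <= mass A.
Proof. by apply/fine_ge0/integral_ge0 => y _; rewrite lee_fin. Qed.

Lemma avg_ge0 (A : set pt) : 0 <= avg mu f A.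
Proof. by rewrite /avg divr_ge0 ?mass_ge0 ?fine_ge0 ?measure_ge0. Qed.

Lemma massE (A : set pt) : 0 < fine (mu A) -> mass A = avg mu f A * fine (mu A).
Proof. by move=> A0; rewrite /avg divfK ?gt_eqF. Qed.

Lemma le_mass (A B : set pt) : measurable A -> measurable B ->
  measurable_fun setT f -> mu.-integrable B (fun y => (f y)%:E) -> A `<=` B ->
  mass A <= mass B.
Proof.
move=> mA mB mf /integrableP[_ finB] AB.
have mabsf : measurable_fun B (fun y => `|f y|%:E).
  apply/measurable_EFinP/measurableT_comp => //.
  exact: measurable_funS measurableT (subsetT B) mf.
have le_int : (\int[mu]_(y in A) `|f y|%:E <= \int[mu]_(y in B) `|f y|%:E)%E.
  by apply: ge0_subset_integral => // y _; rewrite lee_fin.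
have int_ge0 (C : set pt) : (0 <= \int[mu]_(y in C) `|f y|%:E)%E.
  by apply: integral_ge0 => y _; rewrite lee_fin.
by apply: fine_le => //; rewrite ge0_fin_numE// (le_lt_trans le_int).
Qed.

End Averages.

Section MaximalBalls.
Variables (R : realType) (d : nat) (mu : {measure set (d.-tuple R) -> \bar R}).
Variables (alpha : R) (f : d.-tuple R -> R).

Lemma inB_bval_maximal (c : d.-tuple R) r :
  inBc mu alpha f c r \/ inBu mu alpha f c r ->
  0 < r /\ forall rho, r < rho -> bval mu alpha f c rho <= bval mu alpha f c r.
Proof.
case=> [[x [-> r0 e _]] | [x [r0 hx e _]]]; split=> // rho hr;
  rewrite -lee_fin e; apply: ereal_sup_ubound.
- by exists rho => //=; exact: lt_trans r0 hr.
- exists (c, rho) => //=; split; first exact: lt_trans r0 hr.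
  exact: le_lt_trans hx hr.
Qed.

Lemma avg_ballS_le_of_bval (c : d.-tuple R) r rho : 0 <= alpha -> 0 < r -> r <= rho ->
  bval mu alpha f c rho <= bval mu alpha f c r ->
  avg mu f (ballS c rho) <= avg mu f (ballS c r).
Proof.
move=> a0 r0 rrho; rewrite /bval => le_bval.
have rho0 : 0 < rho := lt_le_trans r0 rrho.
have pow_le : r `^ alpha <= rho `^ alpha.
  by apply: ge0_ler_powR; rewrite ?nnegrE ?(ltW r0) ?(ltW rho0).
rewrite -(ler_pM2l (powR_gt0 alpha rho0)) (le_trans le_bval)//.
by rewrite ler_wpM2r ?avg_ge0.
Qed.

Lemma inB_avg_maximal (c : d.-tuple R) r : 0 <= alpha ->
  inBc mu alpha f c r \/ inBu mu alpha f c r ->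
  0 < r /\ forall rho, r < rho -> avg mu f (ballS c rho) <= avg mu f (ballS c r).
Proof.
move=> a0 /inB_bval_maximal[r0 bval_max]; split=> // rho r_rho.
exact: avg_ballS_le_of_bval a0 r0 (ltW r_rho) (bval_max rho r_rho).
Qed.

End MaximalBalls.

Section CubeOverBall.
Variables (R : realType) (d : nat) (mu : {measure set (d.-tuple R) -> \bar R}).
Hypothesis mu_leb : is_lebesgue mu.
Variable f : d.-tuple R -> R.
Hypothesis f_loc : L1loc mu f.
Variables (c a : d.-tuple R) (r l : R).
Hypotheses (d_gt0 : (0 < d)%N) (r_gt0 : 0 < r) (ball_sub_cube : ballS c r `<=` cubeS a l).

Let D_gt0 : 0 < d%:R :> R. Proof. by rewrite ltr0n. Qed.

Let l_gt_rd : r / d%:R < l. Proof. exact: cubeS_side_gt ball_sub_cube. Qed.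

Let l_gt0 : 0 < l. Proof. by apply: lt_trans l_gt_rd; rewrite divr_gt0. Qed.

Let fine_mu_cube : fine (mu (cubeS a l)) = l ^+ d.
Proof. by rewrite lebesgue_cubeS ?(ltW l_gt0). Qed.

Let rho := 2 * d%:R * l.

Let r_lt_rho : r < rho.
Proof. by have := D_gt0; have := l_gt0; move: l_gt_rd; rewrite /rho ltr_pdivrMr // => *; nra. Qed.

Let cube_sub_ball : cubeS a l `<=` ballS c rho.
Proof.
apply: cubeS_sub_ballS_of_mem (ltW l_gt0) (ball_sub_cube (ballS_center c r_gt0)) _.
by have := D_gt0; have := l_gt0; rewrite /rho => *; nra.
Qed.

Let f_int_cube : mu.-integrable (cubeS a l) (fun y => (f y)%:E).
Proof.
apply: integrableS (measurable_ballS c rho) (measurable_cubeS a l) cube_sub_ball _.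
by apply: f_loc.2; exact: lt_trans r_gt0 r_lt_rho.
Qed.

Lemma avg_cubeS_ge :
  avg mu f (ballS c r) <= (d%:R * l / r) ^+ d * avg mu f (cubeS a l).
Proof.
have rd_gt0 : 0 < r / d%:R by rewrite divr_gt0.
have /andP[mu_ball_ge _] := lebesgue_ballS_bounds mu_leb c d_gt0 r_gt0.
rewrite -(ler_pM2l (exprn_gt0 d rd_gt0)) [X in _ <= X]mulrA -exprMn.
have -> : r / d%:R * (d%:R * l / r) = l by field; rewrite !gt_eqF.
rewrite mulrC [X in _ <= X]mulrC -fine_mu_cube -massE ?fine_mu_cube ?exprn_gt0//.
apply: le_trans (_ : avg mu f (ballS c r) * fine (mu (ballS c r)) <= _).
  by rewrite ler_wpM2l ?avg_ge0.
rewrite -massE ?(lt_le_trans (exprn_gt0 d rd_gt0))//.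
apply: le_mass f_int_cube ball_sub_cube => //.
- exact: measurable_ballS.
- exact: measurable_cubeS.
- exact: f_loc.1.
Qed.

Hypothesis ball_maximal : forall rho, r < rho -> avg mu f (ballS c rho) <= avg mu f (ballS c r).

Lemma avg_cubeS_le : avg mu f (cubeS a l) <= (4 * d%:R) ^+ d * avg mu f (ballS c r).
Proof.
have rho_gt0 : 0 < rho := lt_trans r_gt0 r_lt_rho.
have /andP[mu_ball_ge mu_ball_le] := lebesgue_ballS_bounds mu_leb c d_gt0 rho_gt0.
have mu_ball_gt0 : 0 < fine (mu (ballS c rho)).
  by apply: lt_le_trans mu_ball_ge; rewrite exprn_gt0 ?divr_gt0.
rewrite -(ler_pM2r (exprn_gt0 d l_gt0)) -fine_mu_cube -massE ?fine_mu_cube ?exprn_gt0//.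
apply: le_trans (_ : mass mu f (ballS c rho) <= _).
  apply: le_mass cube_sub_ball => //.
  - exact: measurable_cubeS.
  - exact: measurable_ballS.
  - exact: f_loc.1.
  - exact: f_loc.2.
rewrite massE // [X in _ <= X]mulrAC -exprMn.
have -> : 4 * d%:R * l = 2 * rho by rewrite /rho; ring.
rewrite [X in X <= _]mulrC; apply: ler_pM; rewrite ?fine_ge0 ?measure_ge0 ?avg_ge0//.
exact: ball_maximal r_lt_rho.
Qed.

End CubeOverBall.
Theorem lemma4p2 (R : realType) (d : nat) (Cd : R) :
  exists C : R, 0 < C /\
  forall (t : 'I_(3 ^ d) -> d.-tuple R),
  (forall (c : d.-tuple R) (r : R), 0 < r ->
     exists Q, [/\ in_D t Q, ballS c r `<=` cubeS Q.1 Q.2 & Q.2 <= Cd * r]) ->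
  forall QB : d.-tuple R -> R -> d.-tuple R * R,
  (forall (c : d.-tuple R) (r : R), 0 < r ->
     [/\ in_D t (QB c r), ballS c r `<=` cubeS (QB c r).1 (QB c r).2 &
         (QB c r).2 <= Cd * r]) ->
  forall (mu : {measure set (d.-tuple R) -> \bar R}), is_lebesgue mu ->
  forall (alpha : R), 0 < alpha < d%:R ->
  forall f : d.-tuple R -> R, L1loc mu f ->
  forall (c : d.-tuple R) (r : R),
    inBc mu alpha f c r \/ inBu mu alpha f c r ->
    let Q := QB c r in
    [/\ C^-1 * avg mu f (ballS c r) <= avg mu f (cubeS Q.1 Q.2),
        avg mu f (cubeS Q.1 Q.2) <= C * avg mu f (ballS c r),
        C^-1 * r <= Q.2 & Q.2 <= C * r].
Proof.
pose K : R := 4 * (d%:R + 1) * (`|Cd| + 1).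
have [K_ge1 K_ge_4d K_ge_Cd] : [/\ 1 <= K, 4 * d%:R <= K & `|Cd| * (d%:R + 1) <= K].
  by rewrite /K; have := normr_ge0 Cd; have := ler0n R d; split; nra.
have K_gt0 : 0 < K := lt_le_trans ltr01 K_ge1.
exists (K ^+ d); split; first exact: exprn_gt0.
move=> t _ QB QB_spec mu mu_leb alpha /andP[alpha_gt0 alpha_lt_d] f f_loc c r inB /=.
have d_gt0 : (0 < d)%N by rewrite -(ltr0n R) (lt_trans alpha_gt0).
have [r_gt0 maximal] := inB_avg_maximal (ltW alpha_gt0) inB.
have [_] := QB_spec c r r_gt0; case: (QB c r) => a l /= ball_sub_cube l_le.
have l_gt : r / d%:R < l := cubeS_side_gt d_gt0 r_gt0 ball_sub_cube.
have l_gt0 : 0 < l by apply: lt_trans l_gt; rewrite divr_gt0 ?ltr0n.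
have l_le' : l <= `|Cd| * r by apply: le_trans l_le _; rewrite ler_wpM2r ?ler_norm ?(ltW r_gt0).
have K_le_Kd : K <= K ^+ d by rewrite ler_eXnr.
split.
- rewrite ler_pdivrMl ?exprn_gt0//.
  apply: le_trans (avg_cubeS_ge mu_leb f_loc d_gt0 r_gt0 ball_sub_cube) _.
  rewrite ler_wpM2r ?avg_ge0// lerXn2r ?nnegrE ?(ltW K_gt0)//.
    by rewrite divr_ge0 ?mulr_ge0 ?(ltW l_gt0) ?(ltW r_gt0).
  by rewrite ler_pdivrMr //; have := ler0n R d; nra.
- apply: le_trans (avg_cubeS_le mu_leb f_loc d_gt0 r_gt0 ball_sub_cube maximal) _.
  by rewrite ler_wpM2r ?avg_ge0// lerXn2r ?nnegrE ?(ltW K_gt0).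
- rewrite ler_pdivrMl ?exprn_gt0//.
  by move: l_gt; rewrite ltr_pdivrMr ?ltr0n // => ?; nra.
- by apply: le_trans l_le' _; rewrite ler_wpM2r ?ltW//; nra.
Qed.
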